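(* Let $\rho_{AB}$ and $\sigma_B$ be quantum states, $\varepsilon\in(0,1)$, and let $S_A$ be a convex set of quantum states on register $A$. There exists an operator $M^*$ satisfying $\mathrm{Tr}[M^*\rho_{AB}]\ge1-\varepsilon$ such that for all quantum states $\tau_A\in S_A$, $$\mathrm{Tr}[M^*(\tau_A\otimes\sigma_B)]\le 2^{-\tilde{\mathrm{I}}^{\varepsilon,S_A}_{\mathrm{H}}(A:B)_{\rho_{AB},\sigma_B}}.$$
   Context: Finite-dimensional Hilbert spaces; $\log$ base 2. $\mathrm{D}^{\varepsilon}_{\mathrm{H}}(\rho\|\sigma)=\max\{-\log\mathrm{Tr}[M\sigma]: 0\preceq M\preceq \mathbb{I},\ \mathrm{Tr}[M\rho]\ge 1-\varepsilon\}$. For a convex set $S_A$ of states on $A$, $\tilde{\mathrm{I}}^{\varepsilon,S_A}_{\mathrm{H}}(A:B)_{\rho_{AB},\sigma_B}=\min_{\tau_A\in S_A}\mathrm{D}^{\varepsilon}_{\mathrm{H}}(\rho_{AB}\|\tau_A\otimes\sigma_B)$. *)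

From HB Require Import structures.
From mathcomp Require Import all_boot all_order all_algebra.
From mathcomp Require Import complex mxtens.
From mathcomp Require Import boolp classical_sets reals ereal exp.
Set Implicit Arguments. Unset Strict Implicit. Unset Printing Implicit Defensive.
Import Order.TTheory GRing.Theory Num.Theory.
Local Open Scope ring_scope.
Local Open Scope classical_set_scope.

Section QDefs.
Variable R : realType.
Local Notation C := R[i].

Definition adjmx m n (A : 'M[C]_(m, n)) : 'M[C]_(n, m) :=
  (map_mx (fun z : C => (z^*)%C) A)^T.

Definition hermitian n (A : 'M[C]_n) : Prop := adjmx A = A.

Definition psd n (A : 'M[C]_n) : Prop :=
  hermitian A /\ forall v : 'cV[C]_n, 0 <= (adjmx v *m A *m v) 0 0.

Definition loewner n (A B : 'M[C]_n) : Prop := psd (B - A).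

Definition is_state n (rho : 'M[C]_n) : Prop := psd rho /\ \tr rho = 1.

(* real part of the trace (traces below are of products of PSD operators,
   hence real) *)
Definition trR n (A : 'M[C]_n) : R := complex.Re (\tr A).

Definition test_op n (M : 'M[C]_n) : Prop := loewner 0 M /\ loewner M 1%:M.

Definition neglog2 (x : R) : \bar R :=
  if x <= 0 then +oo%E else (- (ln x / ln 2))%:E.

Definition exp2E (x : \bar R) : \bar R :=
  match x with
  | EFin r => (2 `^ r)%:E
  | +oo%E => +oo%E
  | -oo%E => 0%E
  end.

Definition DH n (eps : R) (rho sigma : 'M[C]_n) : \bar R :=
  ereal_sup [set neglog2 (trR (M *m sigma)) |
             M in [set M : 'M[C]_n | test_op M /\ 1 - eps <= trR (M *m rho)]].

Definition ItildeH dA dB (eps : R) (SA : set 'M[C]_dA)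
    (rho : 'M[C]_(dA * dB)) (sigma : 'M[C]_dB) : \bar R :=
  ereal_inf [set DH eps rho (tau *t sigma) | tau in SA].

Definition convex_mxset n (S : set 'M[C]_n) : Prop :=
  forall x y, S x -> S y -> forall t : R, 0 <= t <= 1 ->
    S ((t%:C)%C *: x + ((1 - t)%:C)%C *: y).

End QDefs.

(* The tests [M] with [0 <= M <= 1] and [Tr[M rho] >= 1 - eps] form a compact
   convex set [K], and the payoff [Tr[M (tau *t sigma)]] is affine both in [M]
   and in [tau]. By definition of [ItildeH], for every [tau] in [S_A] and every
   [c > 2^(-ItildeH)] some test in [K] has payoff at most [c]; a minimax
   theorem for such payoffs yields a single test that works for all [tau].
   The minimax theorem follows Komiya's elementary proof of Sion's theorem:
   the case of two functions reduces to the connectedness of [0, 1], and the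
   general case follows by induction on finite families and compactness.
   Compactness of [K] is checked in real coordinates, where [K] is closed and
   bounded. *)

From Pilot Require Import Defs.
From HB Require Import structures.
From mathcomp Require Import all_boot all_order all_algebra.
From mathcomp Require Import complex mxtens.
From mathcomp Require Import boolp classical_sets reals ereal exp.
From mathcomp Require Import topology normedtype derive.
From mathcomp Require Import ring lra.
Import Order.TTheory GRing.Theory Num.Theory.
Import numFieldNormedType.Exports.
Local Open Scope ring_scope.
Local Open Scope classical_set_scope.

(** * Minimax for affine functions on a compact convex set *)

Section ConvexCombinations.
Context {R : realFieldType}.

Lemma conv_le (a b c l : R) : 0 <= l <= 1 -> a <= c -> b <= c ->
  l * a + (1 - l) * b <= c.
Proof. by move=> /andP[l0 l1] ac bc; nra. Qed.

Lemma conv_ge (a b c l : R) : 0 <= l <= 1 -> c <= a -> c <= b ->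
  c <= l * a + (1 - l) * b.
Proof. by move=> /andP[l0 l1] ca cb; nra. Qed.

Lemma conv_gt (a b c l : R) : 0 <= l <= 1 -> c < a -> c < b ->
  c < l * a + (1 - l) * b.
Proof.
move=> /andP[l0 l1] ca cb; have [->|lnz] := eqVneq l 0; first lra.
have lp : 0 < l by rewrite lt_neqAle eq_sym lnz.
have := mulr_gt0 lp (ltac:(lra) : 0 < a - c).
have := mulr_ge0 (ltac:(lra) : 0 <= 1 - l) (ltac:(lra) : 0 <= b - c).
nra.
Qed.

Lemma conv_root (p q : R) : p <= 0 <= q ->
  exists2 a, 0 <= a <= 1 & a * p + (1 - a) * q = 0.
Proof.
move=> /andP[p0 q0]; have [pq|pq] := eqVneq p q.
  by exists 0; [rewrite lexx ler01|rewrite mul0r add0r subr0 mul1r; lra].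
have qp0 : 0 < q - p by rewrite subr_gt0 lt_neqAle pq; lra.
exists (q / (q - p)).
  by rewrite divr_ge0 ?ler_pdivrMr ?mul1r; lra.
by field; rewrite gt_eqF.
Qed.

Lemma continuous_lincomb {T : topologicalType} (p q : R) {f g : T -> R} :
  continuous f -> continuous g -> continuous (fun x => p * f x + q * g x).
Proof.
move=> fc gc x.
by apply: cvgD; apply: cvgM; [exact: cvg_cst|exact: fc|exact: cvg_cst|exact: gc].
Qed.

End ConvexCombinations.

Section CompactSublevels.
Context {R : realType} {T : topologicalType}.
Implicit Types (K : set T) (h f u v : T -> R).

Lemma closed_sublevel {h} (c : R) : continuous h -> closed [set x | h x <= c].
Proof. by move=> /continuous_closedP/(_ _ (@closed_le _ c)). Qed.

Lemma compact_min_le K h (t : R) : compact K -> continuous h ->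
  (forall c, t < c -> exists2 x, K x & h x <= c) -> exists2 x, K x & h x <= t.
Proof.
move=> Kc hc approx.
have [x1 Kx1 _] := approx (t + 1) ltac:(by rewrite ltrDl).
have [x Kx xmin] := compact_EVT_min (ex_intro K x1 Kx1) Kc (continuous_subspaceT hc).
exists x; first by rewrite inE in Kx.
apply/ler_addgt0Pr => e e0; have [z Kz hz] := approx (t + e) ltac:(by rewrite ltrDl).
by apply: le_trans hz; apply: xmin; rewrite inE.
Qed.

Lemma near_sublevel_gap {K f u v} {c : R} (s : R) : compact K ->
  continuous f -> continuous u -> continuous v ->
  (forall x, K x -> f x <= c -> c < u x) ->
  \forall m \near s, forall x, K x -> f x <= c -> c < u x + (m - s) * v x.
Proof.
move=> Kc fc uc vc gap; set K' := K `&` [set x | f x <= c].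
have [[x0 K'x0]|K'0] := pselect (K' !=set0); last first.
  by near=> m => x Kx fx; exfalso; apply: K'0; exists x.
have K'c : compact K' by apply: compact_closedI => //; exact: closed_sublevel.
have [xu /[!inE] -[Kxu fxu] umin] :=
  compact_EVT_min (ex_intro K' x0 K'x0) K'c (continuous_subspaceT uc).
have vnc : continuous (fun x => `|v x|).
  by move=> x; apply: continuous_comp; [exact: vc|exact: norm_continuous].
have [xv _ vmax] := compact_EVT_max (ex_intro K x0 K'x0.1) Kc (continuous_subspaceT vnc).
set e := u xu - c; set B := `|v xv| + 1.
have e0 : 0 < e by rewrite subr_gt0; exact: gap.
have B0 : 0 < B by rewrite ltr_wpDl.
near=> m => x Kx fx.
have vB : `|v x| <= B by rewrite (le_trans (vmax x _)) ?lerDl // inE.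
have ux : u xu <= u x by apply: umin; rewrite inE.
have : `|(m - s) * v x| < e.
  rewrite normrM (le_lt_trans (ler_wpM2l _ vB)) // -ltr_pdivlMr //.
  near: m; move: (divr_gt0 e0 B0).
  by move/(cvgr_distC_lt (F := nbhs s) id s cvg_id).
rewrite ltr_norml => /andP[+ _]; rewrite /e; lra.
Unshelve. all: by end_near.
Qed.

End CompactSublevels.

Lemma connected_locally_constant {T : topologicalType} {A : set T} {P : T -> Prop} :
  connected A -> (forall x, A x -> \forall y \near x, A y -> (P y <-> P x)) ->
  forall x y, A x -> A y -> P x -> P y.
Proof.
move=> Acon Aloc x y Ax Ay Px; apply: contrapT => nPy.
have sep Q : (forall z, A z -> \forall w \near z, A w -> (Q w <-> Q z)) ->
    closure (A `&` Q) `&` (A `&` ~` Q) = set0.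
  move=> Qloc; apply/seteqP; split => // z [clz [Az nQz]].
  have [w [[Aw Qw] wz]] := clz _ (Qloc z Az).
  by apply: nQz; apply/(wz Aw).
have nAloc z : A z -> \forall w \near z, A w -> ((~` P) w <-> (~` P) z).
  move=> Az; apply: filterS (Aloc z Az) => w PwPz Aw.
  by split=> nP P'; apply: nP; apply/(PwPz Aw).
move/connectedP: Acon => /(_ (fun b => if b then A `&` ~` P else A `&` P)).
apply; split.
- by case; [exists y|exists x].
- apply/seteqP; split=> [z Az|z [[]|[]] //].
  by have [Pz|nPz] := pselect (P z); [left|right].
- split; first exact: sep.
  by rewrite setIC -[in X in _ `&` (_ `&` X)](setCK P); exact: sep.
Qed.

Section Minimax.
Context {R : realType} {X : topologicalLmodType R}.

Definition conv_closed (K : set X) :=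
  forall x z a, K x -> K z -> 0 <= a <= 1 -> K (a *: x + (1 - a) *: z).

Definition affine (f : X -> R) :=
  forall x z a, f (a *: x + (1 - a) *: z) = a * f x + (1 - a) * f z.

Lemma affine_lincomb (p q : R) {f g : X -> R} :
  affine f -> affine g -> affine (fun x => p * f x + q * g x).
Proof. by move=> fa ga x z a; rewrite fa ga; ring. Qed.

Lemma scalar_affine {f : X -> R} : scalar f -> affine f.
Proof. by move=> flin x z a; rewrite flin (scalable_linear flin). Qed.

Lemma conv_closed_sublevel {K : set X} {f : X -> R} (c : R) :
  conv_closed K -> affine f -> conv_closed (K `&` [set x | f x <= c]).
Proof.
move=> Kcv fa x z a [Kx fx] [Kz fz] a01; split; first exact: Kcv.
by rewrite /= fa; exact: conv_le.
Qed.

(* The segment from [x] to [z] crosses the hyperplane [f1 = f2], on which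
   every combination of [f1] and [f2] coincides with both. *)
Lemma segment_cross {K : set X} {f1 f2 : X -> R} {l c : R} {x z : X} :
  conv_closed K -> affine f1 -> affine f2 -> K x -> K z ->
  l * f1 x + (1 - l) * f2 x <= c -> l * f1 z + (1 - l) * f2 z <= c ->
  f1 x <= f2 x -> f2 z <= f1 z -> exists2 w, K w & f1 w <= c /\ f2 w <= c.
Proof.
move=> Kcv f1a f2a Kx Kz hx hz f12x f21z.
have [|a a01 cross] := @conv_root _ (f1 x - f2 x) (f1 z - f2 z).
  by apply/andP; lra.
set w := a *: x + (1 - a) *: z.
have f12w : f1 w = f2 w.
  by apply/eqP; rewrite -subr_eq0 -cross /w f1a f2a; apply/eqP; ring.
have hw : l * f1 w + (1 - l) * f2 w <= c.
  by rewrite /w (affine_lincomb l (1 - l) f1a f2a); exact: conv_le.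
by exists w; [exact: Kcv|rewrite -f12w; move: hw; rewrite f12w; lra].
Qed.

Lemma conv_sublevels_meet {K : set X} {f1 f2 : X -> R} (c : R) :
  compact K -> conv_closed K -> continuous f1 -> continuous f2 ->
  affine f1 -> affine f2 ->
  (forall l, 0 <= l <= 1 -> exists2 x, K x & l * f1 x + (1 - l) * f2 x <= c) ->
  exists2 x, K x & f1 x <= c /\ f2 x <= c.
Proof.
move=> Kc Kcv f1c f2c f1a f2a H; apply: contrapT => nosol.
pose h l x := l * f1 x + (1 - l) * f2 x.
(* Without a common solution, [S f1] and [S f2] split [0, 1] into two disjoint
   relatively open sets containing [1] and [0] respectively. *)
pose S f l := exists2 x, K x & h l x <= c /\ f x <= c.
have S_cover l : 0 <= l <= 1 -> S f1 l \/ S f2 l.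
  move=> l01; have [x Kx hx] := H l l01.
  have [f1x|f1x] := leP (f1 x) c; first by left; exists x.
  have [f2x|f2x] := leP (f2 x) c; first by right; exists x.
  suff : c < h l x by rewrite ltNge hx.
  exact: conv_gt.
have S_excl l : S f1 l -> S f2 l -> False.
  move=> [x Kx [hx f1x]] [z Kz [hz f2z]]; apply: nosol.
  have [f12x|/ltW f21x] := leP (f1 x) (f2 x); last by exists x => //; split; lra.
  have [f21z|/ltW f12z] := leP (f2 z) (f1 z); last by exists z => //; split; lra.
  exact: (segment_cross Kcv f1a f2a Kx Kz hx hz).
have S_stable f l : continuous f -> ~ S f l -> \forall m \near l, ~ S f m.
  move=> fc nS; have gap x : K x -> f x <= c -> c < h l x.
    by move=> Kx fx; rewrite ltNge; apply/negP => hx; apply: nS; exists x.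
  have := near_sublevel_gap l Kc fc (continuous_lincomb l (1 - l) f1c f2c)
    (continuous_lincomb 1 (-1) f1c f2c) gap.
  apply: filterS => m gapm [x Kx [hx fx]].
  by have := gapm x Kx fx; move: hx; rewrite /h; lra.
have S1_loc (l : R) : `[0, 1]%classic l ->
    \forall m \near l, `[0, 1]%classic m -> (S f1 m <-> S f1 l).
  move=> _; have [S1l|nS1l] := pselect (S f1 l); last first.
    by apply: filterS (S_stable f1 l f1c nS1l) => m nS1m _; split.
  apply: filterS (S_stable f2 l f2c (S_excl l S1l)) => m nS2m.
  rewrite /= in_itv /= => /S_cover[S1m|//]; by split.
have S1_1 : S f1 1.
  have [|x Kx hx] := H 1; first by rewrite ler01 lexx.
  by exists x => //; move: hx; rewrite /h; split; lra.
have S2_0 : S f2 0.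
  have [|x Kx hx] := H 0; first by rewrite ler01 lexx.
  by exists x => //; move: hx; rewrite /h; split; lra.
apply: (S_excl 0 _ S2_0).
by apply: (connected_locally_constant (@segment_connected R 0 1) S1_loc _ _ _ _ S1_1);
  rewrite /= in_itv /= ler01 lexx.
Qed.

Context {I : choiceType} {Y : set I} {mix : R -> I -> I -> I} {g : I -> X -> R}.
Hypothesis Y_mix : forall y1 y2 a, Y y1 -> Y y2 -> 0 <= a <= 1 -> Y (mix a y1 y2).
Hypothesis g_mix : forall y1 y2 a x, Y y1 -> Y y2 -> 0 <= a <= 1 ->
  g (mix a y1 y2) x = a * g y1 x + (1 - a) * g y2 x.
Hypothesis g_cont : forall y, continuous (g y).
Hypothesis g_affine : forall y, affine (g y).

Lemma minimax_seq (c : R) (ys : seq I) {K : set X} :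
  compact K -> conv_closed K -> K !=set0 ->
  (forall y, Y y -> exists2 x, K x & g y x <= c) -> (forall y, y \in ys -> Y y) ->
  exists2 x, K x & forall y, y \in ys -> g y x <= c.
Proof.
elim: ys K => [|y0 ys IH] K Kc Kcv [x0 Kx0] HK Yys; first by exists x0.
have Yy0 : Y y0 by apply: Yys; rewrite mem_head.
set K' := K `&` [set x | g y0 x <= c].
have HK' y : Y y -> exists2 x, K' x & g y x <= c.
  move=> Yy; have [l l01|x Kx [gyx gy0x]] := conv_sublevels_meet c Kc Kcv
      (g_cont y) (g_cont y0) (g_affine y) (g_affine y0).
    by have [x Kx] := HK _ (Y_mix _ _ _ Yy Yy0 l01); rewrite g_mix //; exists x.
  by exists x.
have [x Kx gy0x] := HK y0 Yy0.
have K'c : compact K' by apply: compact_closedI => //; exact: closed_sublevel.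
have Yys' y : y \in ys -> Y y by move=> yys; apply: Yys; rewrite in_cons yys orbT.
have [z [Kz gy0z] Hz] := IH K' K'c (conv_closed_sublevel c Kcv (g_affine y0))
  (ex_intro _ x (conj Kx gy0x)) HK' Yys'.
by exists z => // y; rewrite in_cons => /orP[/eqP->|/Hz].
Qed.

Theorem minimax (t : R) (K : set X) : compact K -> conv_closed K -> K !=set0 ->
  (forall y, Y y -> forall c, t < c -> exists2 x, K x & g y x <= c) ->
  exists2 x, K x & forall y, Y y -> g y x <= t.
Proof.
move=> Kc Kcv [x0 Kx0] approx.
have HK y : Y y -> exists2 x, K x & g y x <= t.
  by move=> Yy; exact: compact_min_le Kc (g_cont y) (approx y Yy).
have [[y1 Yy1]|Y0] := pselect (Y !=set0); last first.
  by exists x0 => // y Yy; exfalso; apply: Y0; exists y.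
pose sub y := K `&` [set x | g y x <= t].
have sub_finI : finI Y sub.
  move=> D DY; have [|x Kx gx] := minimax_seq t (finmap.enum_fset D) Kc Kcv
    (ex_intro _ x0 Kx0) HK; first by move=> y /DY; rewrite inE.
  by exists x => y /gx.
have [|x [Kx clx]] := Kc _ (finI_filter sub_finI).
  by exists (sub y1); [exact: finI_from1|move=> x []].
exists x => // y Yy.
have subx : closure (sub y) x.
  by move=> B Bx; apply: clx Bx; exists (sub y) => //; exact: finI_from1.
have := closureS (fun z => @proj2 (K z) _) subx.
by move/closure_id: (closed_sublevel t (g_cont y)) => <-.
Qed.

End Minimax.

(** * Complex matrices in real coordinates *)

Lemma scalar_continuous {R : realType} m (L : 'rV[R]_m -> R) : scalar L -> continuous L.
Proof.
move=> Llin; have L0 : L 0 = 0.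
  by have := scalable_linear Llin 0 0; rewrite scale0r => ->; exact: mul0r.
have -> : L = fun x => \sum_j x 0 j * L (delta_mx 0 j).
  apply/funext => x; rewrite {1}[x]row_sum_delta.
  by elim/big_rec2: _ => [|j s y _ <-]; last by rewrite Llin.
elim: (index_enum _) => [|j r IH].
  by under eq_fun do rewrite big_nil; exact: cst_continuous.
have -> : (fun x : 'rV[R]_m => \sum_(i <- j :: r) x 0 i * L (delta_mx 0 i)) =
    (fun x => L (delta_mx 0 j) * x 0 j + 1 * \sum_(i <- r) x 0 i * L (delta_mx 0 i)).
  by apply/funext => x; rewrite big_cons mulrC mul1r.
exact/continuous_lincomb/IH/coord_continuous.
Qed.

Lemma closed_forall {T : topologicalType} {I : Type} (P : I -> set T) :
  (forall i, closed (P i)) -> closed [set x | forall i, P i x].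
Proof.
move=> Pc; have -> : [set x | forall i, P i x] = \bigcap_(i in setT) P i.
  by apply/seteqP; split=> x Px i //; exact: Px.
exact: closed_bigI.
Qed.

Section ComplexMatrixCoordinates.
Context {R : realType} {n : nat}.
Local Notation C := R[i].
Local Notation X := 'rV[R]_(n * n + n * n).
Local Open Scope complex_scope.

(* A complex n x n matrix is encoded by the real row vector of the real parts
   of its entries followed by their imaginary parts. *)
Definition cmx_of_rV (x : X) : 'M[C]_n :=
  \matrix_(i, j) (x 0 (lshift _ (mxvec_index i j)) +i* x 0 (rshift _ (mxvec_index i j))).

Definition rV_of_cmx (M : 'M[C]_n) : X :=
  row_mx (mxvec (map_mx (@complex.Re R) M)) (mxvec (map_mx (@complex.Im R) M)).

Lemma rV_of_cmxK : cancel rV_of_cmx cmx_of_rV.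
Proof.
move=> M; apply/matrixP => i j; rewrite mxE row_mxEl row_mxEr !mxvecE !mxE.
by case: (M i j).
Qed.

Lemma cmx_of_rV_comb (a b : R) (x y : X) :
  cmx_of_rV (a *: x + b *: y) = a%:C *: cmx_of_rV x + b%:C *: cmx_of_rV y.
Proof.
apply/matrixP => i j; rewrite !mxE.
by apply/eqP; rewrite eq_complex /= !mul0r !subr0 !addr0 !eqxx.
Qed.

Lemma cmx_of_rVB (x y : X) : cmx_of_rV (x - y) = cmx_of_rV x - cmx_of_rV y.
Proof.
apply/matrixP => i j; rewrite !mxE.
by apply/eqP; rewrite eq_complex /= !eqxx.
Qed.

(* ['M[C]_n] is not an [lmodType R], so real linearity is stated by hand. *)
Definition real_linear (F : 'M[C]_n -> C) :=
  forall (a b : R) M N, F (a%:C *: M + b%:C *: N) = a%:C * F M + b%:C * F N.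

Lemma Re_comb (a b : R) (z w : C) :
  complex.Re (a%:C * z + b%:C * w) = a * complex.Re z + b * complex.Re w.
Proof. by case: z w => [? ?] [? ?] /=; ring. Qed.

Lemma Im_comb (a b : R) (z w : C) :
  complex.Im (a%:C * z + b%:C * w) = a * complex.Im z + b * complex.Im w.
Proof. by case: z w => [? ?] [? ?] /=; ring. Qed.

Lemma real_linear_Re {F} : real_linear F -> scalar (fun x => complex.Re (F (cmx_of_rV x))).
Proof.
by move=> Flin a x y; rewrite -[y in LHS]scale1r cmx_of_rV_comb Flin Re_comb mul1r.
Qed.

Lemma real_linear_Im {F} : real_linear F -> scalar (fun x => complex.Im (F (cmx_of_rV x))).
Proof.
by move=> Flin a x y; rewrite -[y in LHS]scale1r cmx_of_rV_comb Flin Im_comb mul1r.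
Qed.

Lemma closed_real_linear (F : 'M[C]_n -> C) (A B : set R) :
  real_linear F -> closed A -> closed B ->
  closed [set x | A (complex.Re (F (cmx_of_rV x))) /\ B (complex.Im (F (cmx_of_rV x)))].
Proof.
move=> Flin Ac Bc; apply: closedI; apply: (iffLR (continuous_closedP _)) => //.
- exact/scalar_continuous/real_linear_Re.
- exact/scalar_continuous/real_linear_Im.
Qed.

Lemma closed_real_linear_ge0 F : real_linear F -> closed [set x | 0 <= F (cmx_of_rV x)].
Proof.
move=> Flin; have -> : [set x | 0 <= F (cmx_of_rV x)] =
    [set x | 0 <= complex.Re (F (cmx_of_rV x)) /\ complex.Im (F (cmx_of_rV x)) = 0].
  apply/seteqP; split=> x /=; rewrite lecE /= andbC; first by case/andP=> -> /eqP.
  by case=> -> ->; rewrite eqxx.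
exact: (closed_real_linear F _ _ Flin (@closed_ge R 0) (@closed_eq R 0)).
Qed.

Lemma closed_real_linear_eq0 F : real_linear F -> closed [set x | F (cmx_of_rV x) = 0].
Proof.
move=> Flin; have -> : [set x | F (cmx_of_rV x) = 0] =
    [set x | complex.Re (F (cmx_of_rV x)) = 0 /\ complex.Im (F (cmx_of_rV x)) = 0].
  by apply/seteqP; split=> x /=; case: (F _) => a b /=; [case=> -> ->|case=> -> ->].
exact: (closed_real_linear F _ _ Flin (@closed_eq R 0) (@closed_eq R 0)).
Qed.

Definition herm_gap (i j : 'I_n) (M : 'M[C]_n) : C := M i j - (M j i)^*.

Definition qform (v : 'cV[C]_n) (M : 'M[C]_n) : C := (adjmx v *m M *m v) 0 0.

Lemma herm_gap_lin i j : real_linear (herm_gap i j).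
Proof.
move=> a b M N; rewrite /herm_gap !mxE.
case: (M i j) (M j i) (N i j) (N j i) => [? ?] [? ?] [? ?] [? ?].
by apply/eqP; rewrite eq_complex /=; apply/andP; split; apply/eqP; ring.
Qed.

Lemma qform_lin v : real_linear (qform v).
Proof.
by move=> a b M N; rewrite /qform mulmxDr mulmxDl -!scalemxAr -!scalemxAl !mxE.
Qed.

Lemma hermitianP (M : 'M[C]_n) : Defs.hermitian M <-> forall i j, herm_gap i j M = 0.
Proof.
split=> [Mh i j|Mh].
  have /matrixP/(_ i j)/eqP := Mh.
  by rewrite /herm_gap /adjmx !mxE eq_sym -subr_eq0 => /eqP.
apply/matrixP => i j; rewrite /adjmx !mxE; apply/eqP.
by rewrite eq_sym -subr_eq0; apply/eqP; exact: Mh.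
Qed.

Lemma psdE (M : 'M[C]_n) :
  psd M <-> (forall i j, herm_gap i j M = 0) /\ forall v, 0 <= qform v M.
Proof. by rewrite /psd hermitianP. Qed.

Lemma psd_comb (a b : R) (P Q : 'M[C]_n) : 0 <= a -> 0 <= b -> psd P -> psd Q ->
  psd (a%:C *: P + b%:C *: Q).
Proof.
move=> a0 b0 /psdE[hP qP] /psdE[hQ qQ]; apply/psdE; split=> [i j|v].
  by rewrite herm_gap_lin hP hQ !mulr0 addr0.
by rewrite qform_lin addr_ge0 // mulr_ge0 // lecR.
Qed.

Lemma closed_psd : closed [set x | psd (cmx_of_rV x)].
Proof.
have -> : [set x | psd (cmx_of_rV x)] =
    [set x | forall i j, herm_gap i j (cmx_of_rV x) = 0] `&`
    [set x | forall v, 0 <= qform v (cmx_of_rV x)].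
  by apply/seteqP; split=> x /psdE.
apply: closedI; apply: closed_forall.
- by move=> i; apply: closed_forall => j; exact/closed_real_linear_eq0/herm_gap_lin.
- by move=> v; exact/closed_real_linear_ge0/qform_lin.
Qed.

Lemma bilin_delta (M : 'M[C]_n) (i j : 'I_n) :
  (adjmx (delta_mx i 0 : 'cV[C]_n) *m M *m (delta_mx j 0 : 'cV[C]_n)) 0 0 = M i j.
Proof.
have -> : adjmx (delta_mx i 0 : 'cV[C]_n) = delta_mx 0 i.
  by apply/matrixP => k l; rewrite !mxE andbC; case: (_ && _); rewrite /= ?oppr0.
by rewrite -rowE -colE !mxE.
Qed.

Lemma qform_expand (M : 'M[C]_n) (u w : 'cV[C]_n) (c : C) : qform (u + c *: w) M =
  qform u M + c * (adjmx u *m M *m w) 0 0 + c^* * (adjmx w *m M *m u) 0 0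
  + c^* * c * qform w M.
Proof.
rewrite /qform; have -> : adjmx (u + c *: w) = adjmx u + c^* *: adjmx w.
  by apply/matrixP => i j; rewrite !mxE rmorphD rmorphM.
rewrite !mulmxDl !mulmxDr -!scalemxAl -!scalemxAr !mxE; ring.
Qed.

Lemma psd_entry_bound {M : 'M[C]_n} (i j : 'I_n) : psd M ->
  2 * `|complex.Re (M i j)| <= complex.Re (M i i) + complex.Re (M j j) /\
  2 * `|complex.Im (M i j)| <= complex.Re (M i i) + complex.Re (M j j).
Proof.
move=> /psdE[Mh Mq].
have Mji : M j i = (M i j)^* by apply/eqP; rewrite -subr_eq0 -[_ - _]/(herm_gap j i M) Mh.
have q c : 0 <= complex.Re (qform (delta_mx i 0 + c *: delta_mx j 0) M).
  by have := Mq (delta_mx i 0 + c *: delta_mx j 0); rewrite lecE => /andP[].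
move: (q 1) (q (-1)) (q 'i) (q (-'i)).
rewrite !qform_expand /qform !bilin_delta Mji.
case: (M i i) (M j j) (M i j) => [? ?] [? ?] [x y] /= *.
by split; [case: (ger0P x)|case: (ger0P y)] => _; lra.
Qed.

End ComplexMatrixCoordinates.

Section TestOperators.
Context {R : realType} {n : nat}.
Local Notation C := R[i].
Local Notation X := 'rV[R]_(n * n + n * n).
Local Open Scope complex_scope.

Lemma psd0 : psd (0 : 'M[C]_n).
Proof.
apply/psdE; split=> [i j|v]; first by rewrite /herm_gap !mxE rmorph0 subrr.
by rewrite /qform mulmx0 mul0mx mxE.
Qed.

Lemma psd1 : psd (1%:M : 'M[C]_n).
Proof.
apply/psdE; split=> [i j|v].
  by rewrite /herm_gap !mxE eq_sym; case: (_ == _); rewrite ?rmorph1 ?rmorph0 subrr.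
rewrite /qform mulmx1 mxE; apply: sumr_ge0 => k _.
by rewrite !mxE mulrC mul_conjC_ge0.
Qed.

Lemma test_opE (M : 'M[C]_n) : test_op M <-> psd M /\ psd (1%:M - M).
Proof. by rewrite /test_op /loewner subr0. Qed.

Lemma test_op1 : test_op (1%:M : 'M[C]_n).
Proof. by apply/test_opE; rewrite subrr; split; [exact: psd1|exact: psd0]. Qed.

Lemma test_op_comb (a : R) (M N : 'M[C]_n) : 0 <= a <= 1 -> test_op M -> test_op N ->
  test_op (a%:C *: M + (1 - a)%:C *: N).
Proof.
move=> /andP[a0 a1] /test_opE[M0 M1] /test_opE[N0 N1]; apply/test_opE.
split; first by apply: psd_comb; rewrite // subr_ge0.
have -> : 1%:M - (a%:C *: M + (1 - a)%:C *: N) =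
    a%:C *: (1%:M - M) + (1 - a)%:C *: (1%:M - N).
  by apply/matrixP => i j; rewrite !mxE rmorphB rmorph1; ring.
by apply: psd_comb; rewrite // subr_ge0.
Qed.

Lemma test_op_entry_bound (M : 'M[C]_n) i j : test_op M ->
  `|complex.Re (M i j)| <= 1 /\ `|complex.Im (M i j)| <= 1.
Proof.
move=> /test_opE[M0 M1].
have diag k : complex.Re (M k k) <= 1.
  have /psdE[_ /(_ (delta_mx k 0))] := M1.
  by rewrite /qform bilin_delta !mxE eqxx lecE /= => /andP[_]; case: (M k k) => /= *; lra.
have [ReB ImB] := psd_entry_bound i j M0.
by have := diag i; have := diag j; split; lra.
Qed.

Lemma tr_mulmx_lin (Y : 'M[C]_n) : real_linear (fun M => \tr (M *m Y)).
Proof. by move=> a b M N; rewrite mulmxDl -!scalemxAl mxtraceD !mxtraceZ. Qed.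

Lemma trR_mulmx_continuous (Y : 'M[C]_n) : continuous (fun x : X => trR (cmx_of_rV x *m Y)).
Proof. exact/scalar_continuous/(real_linear_Re (tr_mulmx_lin Y)). Qed.

Lemma closed_test_op : closed [set x : X | test_op (cmx_of_rV x)].
Proof.
have -> : [set x : X | test_op (cmx_of_rV x)] = [set x | psd (cmx_of_rV x)] `&`
    (fun x => rV_of_cmx 1%:M - x) @^-1` [set x | psd (cmx_of_rV x)].
  apply/seteqP; split=> x; rewrite /= cmx_of_rVB rV_of_cmxK; first by move/test_opE.
  by move=> ?; apply/test_opE.
apply: closedI; first exact: closed_psd.
apply: (iffLR (continuous_closedP _)) closed_psd => x.
apply: (@cvgB _ _ _ (nbhs x) _ (fun=> rV_of_cmx 1%:M) id).
- exact: cvg_cst.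
- exact: cvg_id.
Qed.

Definition feasible_tests (eps : R) (rho : 'M[C]_n) : set X :=
  [set x | test_op (cmx_of_rV x) /\ 1 - eps <= trR (cmx_of_rV x *m rho)].

Lemma compact_feasible_tests eps rho : compact (feasible_tests eps rho).
Proof.
have box_compact :=
  @rV_compact R (n * n + n * n) (fun=> `[-1, 1]%classic) (fun=> @segment_compact _ _ _).
apply: subclosed_compact box_compact _.
  apply: closedI; first exact: closed_test_op.
  exact: (iffLR (continuous_closedP _)) (trR_mulmx_continuous rho) _ (@closed_ge R _).
move=> x [/test_op_entry_bound xb _] k; rewrite /= in_itv /= -ler_norml -(splitK k).
by case: (split k) => p; case/mxvec_indexP: p => i j; have := xb i j; rewrite !mxE => -[].
Qed.

Lemma conv_closed_feasible_tests eps rho : conv_closed (feasible_tests eps rho).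
Proof.
move=> x z a [xT xrho] [zT zrho] a01; rewrite /feasible_tests /= cmx_of_rV_comb.
split; first exact: test_op_comb.
by rewrite /trR (tr_mulmx_lin rho) Re_comb; exact: conv_ge.
Qed.

Lemma feasible_tests1 eps rho : 0 <= eps -> \tr rho = 1 ->
  feasible_tests eps rho (rV_of_cmx 1%:M).
Proof.
move=> eps0 rho1; rewrite /feasible_tests /= rV_of_cmxK mul1mx /trR rho1.
by split; [exact: test_op1|rewrite /= lerBlDr lerDl].
Qed.

End TestOperators.

Section NegLog2.
Context {R : realType}.

Lemma neglog2_lt (u c : R) : (neglog2 c < neglog2 u)%E -> u < c.
Proof.
rewrite /neglog2; have [|c0] := leP c 0; first by rewrite ltNge leey.
have [u0 _|u0] := leP u 0; first exact: le_lt_trans c0.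
have ln2 : 0 < ln (2 : R) by rewrite ln_gt0 // ltr1n.
by rewrite lte_fin ltrN2 ltr_pM2r ?invr_gt0 // ltr_ln ?posrE.
Qed.

Lemma neglog2_lt_of_exp2E (I : \bar R) (c : R) :
  (exp2E (- I) < c%:E)%E -> (neglog2 c < I)%E.
Proof.
case: I => [r| |] //=; rewrite ?lte_fin => tc; last first.
  by rewrite /neglog2 leNgt tc ltry.
have c0 : 0 < c by apply: lt_trans tc; exact: powR_gt0.
have ln2 : 0 < ln (2 : R) by rewrite ln_gt0 // ltr1n.
have : ln (2 `^ (- r)) < ln c by rewrite ltr_ln ?posrE ?powR_gt0.
rewrite ln_powR /neglog2 leNgt c0 lte_fin => lt_ln.
by rewrite ltrNl ltr_pdivlMr // -mulNr.
Qed.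

End NegLog2.

Section HypothesisTesting.
Context {R : realType} {dA dB : nat}.
Local Notation C := R[i].
Local Notation N := (dA * dB)%N.
Local Open Scope complex_scope.

Lemma tensmx_combl (a b : C) (t t' : 'M[C]_dA) (s : 'M[C]_dB) :
  (a *: t + b *: t') *t s = a *: (t *t s) + b *: (t' *t s).
Proof. by apply/matrixP => i j; rewrite !mxE; ring. Qed.

Lemma uniform_test {rho : 'M[C]_N} {sigma : 'M[C]_dB} {eps : R} {SA : set 'M[C]_dA}
    (t : R) :
  \tr rho = 1 -> 0 <= eps -> convex_mxset SA ->
  (forall tau, SA tau -> forall c, t < c -> (neglog2 c < DH eps rho (tau *t sigma))%E) ->
  exists M, test_op M /\ 1 - eps <= trR (M *m rho) /\
    forall tau, SA tau -> trR (M *m (tau *t sigma)) <= t.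
Proof.
move=> rho1 eps0 SAcvx HDH.
pose payoff (tau : 'M[C]_dA) (x : 'rV[R]_(N * N + N * N)) :=
  trR (cmx_of_rV x *m (tau *t sigma)).
have payoff_mix t1 t2 (a : R) x : payoff (a%:C *: t1 + (1 - a)%:C *: t2) x =
    a * payoff t1 x + (1 - a) * payoff t2 x.
  by rewrite /payoff /trR tensmx_combl mulmxDr -!scalemxAr mxtraceD !mxtraceZ Re_comb.
have [|x [xT xrho] xt] := minimax (fun t1 t2 a St1 St2 a01 => SAcvx t1 t2 St1 St2 a a01)
    (fun t1 t2 a x _ _ _ => payoff_mix t1 t2 a x)
    (fun tau => trR_mulmx_continuous (tau *t sigma))
    (fun tau => scalar_affine (real_linear_Re (tr_mulmx_lin (tau *t sigma))))
    t _ (compact_feasible_tests eps rho) (conv_closed_feasible_tests eps rho)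
    (ex_intro _ _ (feasible_tests1 eps rho eps0 rho1)).
  move=> tau Stau c tc; have [_ [M [MT Mrho] <-]] := ereal_sup_gt (HDH tau Stau c tc).
  move=> /neglog2_lt Mc; exists (rV_of_cmx M).
    by rewrite /feasible_tests /= rV_of_cmxK.
  by rewrite /payoff rV_of_cmxK ltW.
by exists (cmx_of_rV x).
Qed.

End HypothesisTesting.

Theorem lemma5 (R : realType) (dA dB : nat)
  (rho : 'M[R[i]]_(dA * dB)) (sigma : 'M[R[i]]_dB) (eps : R)
  (SA : set 'M[R[i]]_dA) :
  is_state rho -> is_state sigma -> 0 < eps < 1 ->
  (forall tau, SA tau -> is_state tau) -> convex_mxset SA ->
  exists Mstar : 'M[R[i]]_(dA * dB),
    test_op Mstar /\ 1 - eps <= trR (Mstar *m rho) /\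
    forall tau, SA tau ->
      ((trR (Mstar *m (tau *t sigma)))%:E
         <= exp2E (- ItildeH eps SA rho sigma))%E.
Proof.
move=> [_ rho1] _ /andP[/ltW eps0 _] _ SAcvx.
set I := ItildeH eps SA rho sigma.
have [->|Ifin] := eqVneq I -oo%E.
  have [T1 tr1] := feasible_tests1 eps rho eps0 rho1; rewrite rV_of_cmxK in T1 tr1.
  by exists 1%:M; split=> //; split=> // tau _; rewrite leey.
have exp2E_fin : exp2E (- I) = (fine (exp2E (- I)))%:E.
  by move: Ifin; case: (I).
have [|M [MT [Mrho Mt]]] :=
  uniform_test (sigma := sigma) (fine (exp2E (- I))) rho1 eps0 SAcvx.
  move=> tau Stau c tc; apply: (@lt_le_trans _ _ I).
    by apply: neglog2_lt_of_exp2E; rewrite exp2E_fin lte_fin.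
  by apply: ereal_inf_lbound; exists tau.
by exists M; split=> //; split=> // tau Stau; rewrite exp2E_fin lee_fin Mt.
Qed.
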